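(* For a class $K$ of algebras of type $\tau$, the following are equivalent: (a) the class $\mathbf S\mathbf P(\mathbf D(K))$ is a quasivariety; (b) $\mathbf D(K)$ is quasicompact; (c) $K$ is hyper-quasi-compact.
   Context: For a hypersubstitution $\sigma$ of type $\tau$ (assigning to each $n$-ary operation symbol an $n$-ary term of type $\tau$, extended to all terms), the derived algebra $\mathbf A^\sigma$ has the same universe as $\mathbf A$ and fundamental operations $\sigma(f_\gamma)^{\mathbf A}$; $\mathbf D(K)$ is the class of all derived algebras of members of $K$. $\mathbf S$ and $\mathbf P$ denote closure (up to isomorphism) under subalgebras and direct products. A quasivariety is a class of algebras defined by a set of quasi-identities (Horn implications $\bigwedge_{i<n}(t_i=s_i)\to(t_n=s_n)$ with finitely many premises). A class $L$ is quasicompact if whenever an implication $\bigwedge_{i\in I}(t_i=s_i)\rightarrow (t=s)$ with an arbitrary (possibly infinite) set of atomic premises, in any set of variables, holds in every algebra of $L$, there is a finite $F\subseteq I$ such that $\bigwedge_{i\in F}(t_i=s_i)\rightarrow(t=s)$ holds in every algebra of $L$. A class $K$ is hyper-quasi-compact if the same holds with ''holds'' replaced by ''is hypersatisfied'', where an implication is hypersatisfied in $\mathbf A$ if for every hypersubstitution $\sigma$ the implication $\bigwedge_{i}(\sigma(t_i)=\sigma(s_i))\rightarrow(\sigma(t)=\sigma(s))$ holds in $\mathbf A$. *)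

From mathcomp Require Import all_boot.
From Stdlib Require Import List.

Set Implicit Arguments.
Unset Strict Implicit.
Unset Printing Implicit Defensive.

Section UA.

Variables (F : Type) (ar : F -> nat).

(* Algebras of type tau (carriers may be empty). *)
Record algebra := Algebra {
  carrier :> Type;
  ops : forall f : F, ('I_(ar f) -> carrier) -> carrier }.
Arguments ops a f _ : clear implicits.

Inductive term (X : Type) : Type :=
| Var : X -> term X
| App : forall f : F, ('I_(ar f) -> term X) -> term X.
Arguments Var {X} x.
Arguments App {X} f ts.

Fixpoint eval (A : algebra) (X : Type) (v : X -> A) (t : term X) : A :=
  match t with
  | Var x => v x
  | App f ts => ops A f (fun i => eval v (ts i))
  end.

Fixpoint subst (X Y : Type) (s : X -> term Y) (t : term X) : term Y :=
  match t with
  | Var x => s x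
  | App f ts => App f (fun i => subst s (ts i))
  end.

(* Hypersubstitutions: each n-ary symbol goes to an n-ary term,
   i.e. a term in the variables x_0, ..., x_(n-1). *)
Definition hypersub := forall f : F, term 'I_(ar f).

Fixpoint hyp_ext (sigma : hypersub) (X : Type) (t : term X) : term X :=
  match t with
  | Var x => Var x
  | App f ts => subst (fun i => hyp_ext sigma (ts i)) (sigma f)
  end.

Definition derived (A : algebra) (sigma : hypersub) : algebra :=
  @Algebra (carrier A) (fun f args => eval args (sigma f)).

Definition class := algebra -> Prop.

Definition D (K : class) : class :=
  fun B => exists (A : algebra) (sigma : hypersub), K A /\ B = derived A sigma.

Definition hom (A B : algebra) (h : A -> B) : Prop :=
  forall (f : F) (args : 'I_(ar f) -> A), h (ops A f args) = ops B f (fun i => h (args i)).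

Definition iso (A B : algebra) : Prop :=
  exists h : A -> B, hom h /\ bijective h.

Definition closed (A : algebra) (P : A -> Prop) : Prop :=
  forall (f : F) (args : 'I_(ar f) -> A), (forall i, P (args i)) -> P (ops A f args).

Definition sub_alg (A : algebra) (P : A -> Prop) (HP : closed P) : algebra :=
  @Algebra {x : A | P x}
    (fun f args => exist P (ops A f (fun i => proj1_sig (args i)))
                     (HP f _ (fun i => proj2_sig (args i)))).

Definition prod_alg (I : Type) (A : I -> algebra) : algebra :=
  @Algebra (forall i : I, A i) (fun f args i => ops (A i) f (fun k => args k i)).

Definition S (L : class) : class :=
  fun B => exists (A : algebra) (P : A -> Prop) (HP : closed P),
    L A /\ iso B (sub_alg HP).

Definition P (L : class) : class :=
  fun B => exists (I : Type) (A : I -> algebra),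
    (forall i, L (A i)) /\ iso B (prod_alg A).

Record quasi_identity := QId {
  qi_prem : list (term nat * term nat);
  qi_concl : term nat * term nat }.

Definition sat_qi (A : algebra) (q : quasi_identity) : Prop :=
  forall v : nat -> A,
    (forall p, In p (qi_prem q) -> eval v p.1 = eval v p.2) ->
    eval v (qi_concl q).1 = eval v (qi_concl q).2.

Definition is_quasivariety (L : class) : Prop :=
  exists Sigma : quasi_identity -> Prop,
    forall A : algebra, L A <-> (forall q, Sigma q -> sat_qi A q).

Definition holds_impl (A : algebra) (X I : Type)
    (prem : I -> term X * term X) (Pi : I -> Prop) (c : term X * term X) : Prop :=
  forall v : X -> A,
    (forall i, Pi i -> eval v (prem i).1 = eval v (prem i).2) ->
    eval v c.1 = eval v c.2.

Definition hypersat_impl (A : algebra) (X I : Type)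
    (prem : I -> term X * term X) (Pi : I -> Prop) (c : term X * term X) : Prop :=
  forall sigma : hypersub,
    holds_impl A (fun i => (hyp_ext sigma (prem i).1, hyp_ext sigma (prem i).2)) Pi
      (hyp_ext sigma c.1, hyp_ext sigma c.2).

Definition quasicompact (L : class) : Prop :=
  forall (X I : Type) (prem : I -> term X * term X) (c : term X * term X),
    (forall A, L A -> holds_impl A prem (fun _ => True) c) ->
    exists l : list I, forall A, L A -> holds_impl A prem (fun i => In i l) c.

Definition hyper_quasi_compact (K : class) : Prop :=
  forall (X I : Type) (prem : I -> term X * term X) (c : term X * term X),
    (forall A, K A -> hypersat_impl A prem (fun _ => True) c) ->
    exists l : list I, forall A, K A -> hypersat_impl A prem (fun i => In i l) c.

End UA.

From Pilot Require Import Defs.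
From mathcomp Require Import all_boot.
From Stdlib Require Import List.
From Stdlib Require Import Classical ClassicalEpsilon FunctionalExtensionality.
From Stdlib Require Import PropExtensionality ProofIrrelevance.

Set Implicit Arguments.
Unset Strict Implicit.
Unset Printing Implicit Defensive.

(* An implication valid in a class L is valid in S P L.  If S P L is a
   quasivariety, the term algebra modulo "finitely derivable from the premises"
   lies in S P L, and evaluating the conclusion there at the generic valuation
   shows that the conclusion is finitely derivable.  Conversely, if L is
   quasicompact, the diagram of an algebra A satisfying the quasi-identities of
   L cannot force a = b for a <> b, so homomorphisms into members of L separate
   the points of A and embed it into a product.  Finally an implication holds in
   A^sigma iff its sigma-image holds in A, which turns quasicompactness of D(K)
   into hyper-quasi-compactness of K. *)

Lemma In_enum n (i : 'I_n) : In i (enum 'I_n).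
Proof.
have : i \in enum 'I_n by rewrite mem_enum.
elim: (enum 'I_n) => // j s IH; rewrite seq.in_cons => /orP [/eqP ->|/IH] /=; auto.
Qed.

Lemma proj1_sig_inj (T : Type) (Q : T -> Prop) (x y : {z | Q z}) :
  proj1_sig x = proj1_sig y -> x = y.
Proof. apply: eq_sig_hprop => z; exact: proof_irrelevance. Qed.

Lemma dependent_choice (J : Type) (T : J -> Type) (R : forall j, T j -> Prop) :
  (forall j, exists x, R j x) -> exists f : forall j, T j, forall j, R j (f j).
Proof.
move=> H; exists (fun j => proj1_sig (constructive_indefinite_description _ (H j))).
move=> j; exact: proj2_sig.
Qed.

Lemma exists_common_list (J I : Type) (Q : J -> list I -> Prop) (js : list J) :
  (forall j l l', incl l l' -> Q j l -> Q j l') ->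
  (forall j, In j js -> exists l, Q j l) -> exists l, forall j, In j js -> Q j l.
Proof.
move=> Qmono; elim: js => [|j js IH] Hjs; first by exists nil.
have [l1 H1] := Hjs j (in_eq _ _).
have [l2 H2] := IH (fun k Hk => Hjs k (in_cons _ _ _ Hk)).
exists (l1 ++ l2) => k [<-|Hk].
- by apply: Qmono H1; apply: incl_appl; apply: incl_refl.
- by apply: Qmono (H2 k Hk); apply: incl_appr; apply: incl_refl.
Qed.

Section Algebras.

Variables (F : Type) (ar : F -> nat).
Implicit Types (A B C : algebra ar) (L : class ar).

Fixpoint vars {X : Type} (t : term ar X) : list X :=
  match t with
  | Var x => [:: x]
  | App f ts => concat (List.map (fun i => vars (ts i)) (enum 'I_(ar f)))
  end.

Lemma eval_subst A (X Y : Type) (s : X -> term ar Y) (v : Y -> A) t :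
  eval v (subst s t) = eval (fun x => eval v (s x)) t.
Proof.
elim: t => [x|f ts IH] //=; congr (ops _).
by apply: functional_extensionality => i; exact: IH.
Qed.

Lemma eval_eq_on_vars A (X : Type) (v w : X -> A) t :
  (forall x, In x (vars t) -> v x = w x) -> eval v t = eval w t.
Proof.
elim: t => [x|f ts IH] /= H; first by apply: H; left.
congr (ops _); apply: functional_extensionality => i; apply: IH => x Hx.
apply: H; apply/in_concat; exists (vars (ts i)); split => //.
by apply/in_map_iff; exists i; split => //; exact: In_enum.
Qed.

Lemma eval_derived A sigma (X : Type) (v : X -> A) t :
  @eval _ _ (derived A sigma) X v t = eval v (hyp_ext sigma t).
Proof.
elim: t => [x|f ts IH] //=; rewrite eval_subst /=; congr (eval _ (sigma f)).
by apply: functional_extensionality => i; exact: IH.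
Qed.

Lemma eval_hom A B (h : A -> B) (X : Type) (v : X -> A) t :
  hom h -> h (eval v t) = eval (fun x => h (v x)) t.
Proof.
move=> Hh; elim: t => [x|f ts IH] //=; rewrite Hh; congr (ops _).
by apply: functional_extensionality => i; exact: IH.
Qed.

Lemma eval_prod (J : Type) (A : J -> algebra ar) (X : Type) (v : X -> prod_alg A) t j :
  eval v t j = eval (fun x => v x j) t.
Proof.
elim: t => [x|f ts IH] //=; congr (ops _).
by apply: functional_extensionality => i; exact: IH.
Qed.

Section Implications.

Variables (X I : Type) (prem : I -> term ar X * term ar X) (c : term ar X * term ar X).

Lemma holds_impl_mono A (Pi Pi' : I -> Prop) :
  (forall i, Pi i -> Pi' i) -> holds_impl A prem Pi c -> holds_impl A prem Pi' c.
Proof. by move=> HPi H v Hv; apply: H => i Hi; apply: Hv; exact: HPi. Qed.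

Lemma holds_impl_derived A sigma (Pi : I -> Prop) :
  holds_impl (derived A sigma) prem Pi c <->
  holds_impl A (fun i => (hyp_ext sigma (prem i).1, hyp_ext sigma (prem i).2)) Pi
    (hyp_ext sigma c.1, hyp_ext sigma c.2).
Proof.
rewrite /holds_impl /=; split=> H v Hv.
- by rewrite -!eval_derived; apply: H => i Hi; rewrite !eval_derived; exact: Hv.
- by rewrite !eval_derived; apply: H => i Hi; rewrite -!eval_derived; exact: Hv.
Qed.

Lemma holds_impl_inj_hom A B (h : A -> B) (Pi : I -> Prop) :
  hom h -> injective h -> holds_impl B prem Pi c -> holds_impl A prem Pi c.
Proof.
move=> Hh Hinj HB v Hv; apply: Hinj; rewrite !eval_hom //; apply: HB => i Hi.
by rewrite -!eval_hom // Hv.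
Qed.

Lemma holds_impl_prod (J : Type) (A : J -> algebra ar) (Pi : I -> Prop) :
  (forall j, holds_impl (A j) prem Pi c) -> holds_impl (prod_alg A) prem Pi c.
Proof.
move=> H v Hv; apply: functional_extensionality_dep => j; rewrite !eval_prod.
by apply: H => i Hi; rewrite -!eval_prod Hv.
Qed.

Lemma holds_impl_SP L (Pi : I -> Prop) :
  (forall A, L A -> holds_impl A prem Pi c) ->
  forall B, S (P L) B -> holds_impl B prem Pi c.
Proof.
move=> HL B [C [Q [HQ [[J [Aj [HAj [g [Hg /bij_inj Hg_inj]]]]] [h [Hh /bij_inj Hh_inj]]]]]].
apply: (holds_impl_inj_hom Hh Hh_inj).
apply: (@holds_impl_inj_hom (sub_alg HQ) C (@proj1_sig _ Q)) => //.
  exact: proj1_sig_inj.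
by apply: (holds_impl_inj_hom Hg Hg_inj); apply: holds_impl_prod => j; exact: HL.
Qed.

End Implications.

Lemma P_prod_alg L (J : Type) (B : J -> algebra ar) :
  (forall j, L (B j)) -> P L (prod_alg B).
Proof. by move=> HB; exists J, B; split => //; exists id; split => //; exists id. Qed.

Lemma S_of_inj_hom L A C (h : A -> C) : L C -> hom h -> injective h -> S L A.
Proof.
move=> LC Hh Hinj.
pose Q (y : C) := exists x, h x = y.
have HQ : Defs.closed Q.
  move=> f args /dependent_choice [xs Hxs]; exists (ops xs); rewrite Hh.
  by congr (ops _); apply: functional_extensionality => i; exact: Hxs.
exists C, Q, HQ; split => //.
pose k x : sub_alg HQ := exist Q (h x) (ex_intro _ x erefl).
have [g Hg] := dependent_choice (fun y : sub_alg HQ => proj2_sig y).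
exists k; split; first by move=> f args; apply: proj1_sig_inj; exact: Hh.
by exists g => [x|y]; [apply: Hinj; exact: Hg (k x) | apply: proj1_sig_inj; exact: Hg].
Qed.

Lemma SP_of_L L A : L A -> S (P L) A.
Proof.
move=> LA; apply: (@S_of_inj_hom _ _ (prod_alg (fun _ : unit => A)) (fun x _ => x)) => //.
- exact: P_prod_alg.
- by move=> x y /(congr1 (fun g => g tt)).
Qed.

Lemma SP_of_separated L A :
  (forall a b : A, a <> b -> exists B (v : A -> B), L B /\ hom v /\ v a <> v b) ->
  S (P L) A.
Proof.
move=> sep; pose J := {p : A * A | p.1 <> p.2}.
have sepJ (j : J) :
    exists B, L B /\ exists v : A -> B, hom v /\ v (proj1_sig j).1 <> v (proj1_sig j).2.
  by have [B [v [LB Hv]]] := sep _ _ (proj2_sig j); exists B; split => //; exists v.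
have [Bf HBf] := dependent_choice sepJ.
have [vf Hvf] := dependent_choice (fun j => (HBf j).2).
apply: (@S_of_inj_hom _ _ (prod_alg Bf) (fun x j => vf j x)).
- by apply: P_prod_alg => j; exact: (HBf j).1.
- by move=> f args; apply: functional_extensionality_dep => j; exact: (Hvf j).1.
- move=> x y Hxy; apply: NNPP => nxy; apply: (Hvf (exist _ (x, y) nxy)).2.
  exact: (congr1 (fun g => g _) Hxy).
Qed.

(* Rename the finitely many variables involved to their positions in a list. *)
Lemma quasi_identity_of_finite_impl (X I : Type) (x0 : X)
    (prem : I -> term ar X * term ar X) (l : list I) (c : term ar X * term ar X) :
  exists q : quasi_identity ar,
    forall B, sat_qi B q <-> holds_impl B prem (fun i => In i l) c.
Proof.
pose vs (p : term ar X * term ar X) := vars p.1 ++ vars p.2.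
pose xs := x0 :: concat (List.map vs (c :: List.map prem l)).
have vs_xs p : In p (c :: List.map prem l) -> incl (vars p.1) xs /\ incl (vars p.2) xs.
  move=> Hp; apply: incl_app_inv => x Hx; right; apply/in_concat; exists (vs p).
  by split => //; apply/in_map_iff; exists p.
have index_of x : exists n, In x xs -> List.nth n xs x0 = x.
  case: (classic (In x xs)) => [/(In_nth _ _ x0) [n [_ Hn]]|Hx]; first by exists n.
  by exists 0 => /Hx.
have [idx Hidx] := dependent_choice index_of.
pose ren t := subst (fun x => Var ar (idx x)) t.
exists (QId (List.map (fun i => (ren (prem i).1, ren (prem i).2)) l) (ren c.1, ren c.2)) => B.
have eval_ren (u : nat -> B) t : eval u (ren t) = eval (fun x => u (idx x)) t.
  exact: eval_subst.
have eval_ren_nth (v : X -> B) t :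
    incl (vars t) xs -> eval (fun n => v (List.nth n xs x0)) (ren t) = eval v t.
  by move=> Ht; rewrite eval_ren; apply: eval_eq_on_vars => x Hx; rewrite Hidx //; exact: Ht.
split=> [Hq v Hv | Hl u Hu] /=.
- have [Hc1 Hc2] := vs_xs c (in_eq _ _).
  rewrite -(eval_ren_nth v c.1) // -(eval_ren_nth v c.2) //; apply: Hq => p /=.
  move=> /in_map_iff [i [<- Hi]] /=.
  have [Hp1 Hp2] := vs_xs (prem i) (in_cons _ _ _ (in_map prem _ _ Hi)).
  by rewrite !eval_ren_nth //; exact: Hv.
- rewrite !eval_ren; apply: Hl => i Hi; rewrite -!eval_ren.
  exact: Hu _ (in_map (fun i => (ren (prem i).1, ren (prem i).2)) _ _ Hi).
Qed.

Definition diagram A := {p : term ar A * term ar A | eval id p.1 = eval id p.2}.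

Lemma diagram_hom A B (v : A -> B) :
  (forall p : diagram A, eval v (proj1_sig p).1 = eval v (proj1_sig p).2) -> hom v.
Proof.
move=> Hv f args; symmetry.
exact: (Hv (exist _ (App (fun i => Var ar (args i)), Var ar (ops args)) erefl)).
Qed.

Lemma separating_hom L A :
  quasicompact L -> (forall q, (forall B, L B -> sat_qi B q) -> sat_qi A q) ->
  forall a b : A, a <> b -> exists B (v : A -> B), L B /\ hom v /\ v a <> v b.
Proof.
move=> HL HA a b nab; apply: NNPP => no_sep.
pose prem (p : diagram A) := proj1_sig p.
have [l Hl] : exists l, forall B, L B ->
    holds_impl B prem (fun i => In i l) (Var ar a, Var ar b).
  (* A valuation refuting this implication would be a separating homomorphism. *)
  apply: HL => B LB v Hv; apply: NNPP => Hne; apply: no_sep.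
  by exists B, v; do 2!split => //; apply: diagram_hom => p; exact: Hv.
have [q Hq] := quasi_identity_of_finite_impl a prem l (Var ar a, Var ar b).
have Aq : sat_qi A q by apply: HA => B LB; apply/Hq; exact: Hl.
by apply: nab; apply: (proj1 (Hq A) Aq id) => p _; exact: proj2_sig p.
Qed.

Lemma quasivariety_SP_of_quasicompact L : quasicompact L -> is_quasivariety (S (P L)).
Proof.
move=> HL; exists (fun q => forall B, L B -> sat_qi B q) => A; split.
- move=> HA q Hq.
  exact: (@holds_impl_SP _ _ (fun p => p) (qi_concl q) L (fun p => In p (qi_prem q)) Hq A HA).
- by move=> HA; apply: SP_of_separated; exact: separating_hom.
Qed.

Record term_congruence (X : Type) (theta : term ar X -> term ar X -> Prop) : Prop := {
  cong_refl : forall t, theta t t;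
  cong_sym : forall t s, theta t s -> theta s t;
  cong_trans : forall t s r, theta t s -> theta s r -> theta t r;
  cong_app : forall f (ts ss : 'I_(ar f) -> term ar X),
    (forall i, theta (ts i) (ss i)) -> theta (App ts) (App ss) }.

Section TermQuotient.

Variables (X : Type) (theta : term ar X -> term ar X -> Prop).

(* Classes are represented by the predicates [theta t]. *)
Definition quot_class := {R : term ar X -> Prop | exists t, R = theta t}.

Definition cls (t : term ar X) : quot_class := exist _ (theta t) (ex_intro _ t erefl).

Definition rep (R : quot_class) : term ar X :=
  proj1_sig (constructive_indefinite_description _ (proj2_sig R)).

Lemma cls_rep R : cls (rep R) = R.
Proof.
apply: proj1_sig_inj; symmetry.
exact: proj2_sig (constructive_indefinite_description _ (proj2_sig R)).
Qed.

Definition quot_alg : algebra ar :=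
  @Algebra F ar quot_class (fun f args => cls (App (fun i => rep (args i)))).

Hypothesis theta_cong : term_congruence theta.

Lemma cls_eqP t s : cls t = cls s <-> theta t s.
Proof.
case: theta_cong => Hrefl Hsym Htrans _; split=> [/(congr1 (@proj1_sig _ _)) /= ->|Hts].
  exact: Hrefl.
apply: proj1_sig_inj; apply: functional_extensionality => r /=.
by apply: propositional_extensionality; split; apply: Htrans; [exact: Hsym|].
Qed.

Lemma eval_quot (Y : Type) (u : Y -> quot_alg) t :
  eval u t = cls (subst (fun y => rep (u y)) t).
Proof.
elim: t => [y|f ts IH] /=; first by rewrite cls_rep.
apply/cls_eqP; apply: (cong_app theta_cong) => i; rewrite IH; apply/cls_eqP; exact: cls_rep.
Qed.

Lemma eval_quot_cls t : eval (fun x => cls (Var ar x) : quot_alg) t = cls t.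
Proof.
rewrite eval_quot; apply/cls_eqP; elim: t => [x|f ts IH] /=.
- by apply/cls_eqP; exact: cls_rep.
- exact: (cong_app theta_cong).
Qed.

End TermQuotient.

Section FiniteConsequence.

Variables (L : class ar) (X I : Type) (prem : I -> term ar X * term ar X).

Definition fin_entails (t s : term ar X) : Prop :=
  exists l : list I, forall A, L A -> holds_impl A prem (fun i => In i l) (t, s).

Lemma fin_entails_all (J : Type) (e : J -> term ar X * term ar X) (js : list J) :
  (forall j, In j js -> fin_entails (e j).1 (e j).2) ->
  exists l, forall j, In j js -> forall A, L A -> holds_impl A prem (fun i => In i l) (e j).
Proof.
apply: exists_common_list => j l l' Hll' Hl A LA.
exact: holds_impl_mono Hll' (Hl A LA).
Qed.

Lemma fin_entails_congruence : term_congruence fin_entails.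
Proof.
split.
- by move=> t; exists nil.
- by move=> t s [l Hl]; exists l => A LA v Hv; symmetry; exact: Hl.
- move=> t s r [l1 H1] [l2 H2]; exists (l1 ++ l2) => A LA v Hv.
  rewrite (H1 A LA v); last by move=> i Hi; apply: Hv; apply: in_or_app; left.
  by apply: (H2 A LA v) => i Hi; apply: Hv; apply: in_or_app; right.
- move=> f ts ss H.
  have [l Hl] := fin_entails_all (e := fun i => (ts i, ss i)) (js := enum 'I_(ar f))
    (fun i _ => H i).
  exists l => A LA v Hv /=; congr (ops _); apply: functional_extensionality => i.
  exact: Hl i (In_enum i) A LA v Hv.
Qed.

Lemma fin_quot_sat_qi q :
  (forall A, L A -> sat_qi A q) -> sat_qi (quot_alg fin_entails) q.
Proof.
have cong := fin_entails_congruence.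
move=> Hq u Hu; pose r y := rep (u y).
rewrite !(eval_quot cong); apply/(cls_eqP cong).
have prem_entailed p : In p (qi_prem q) -> fin_entails (subst r p.1) (subst r p.2).
  by move=> Hp; apply/(cls_eqP cong); rewrite -!(eval_quot cong); exact: Hu.
have [l Hl] := fin_entails_all (e := fun p => (subst r p.1, subst r p.2)) prem_entailed.
exists l => A LA v Hv /=; rewrite !eval_subst; apply: (Hq A LA) => p Hp.
by rewrite -!eval_subst; exact: Hl p Hp A LA v Hv.
Qed.

End FiniteConsequence.

Lemma quasicompact_of_quasivariety_SP L : is_quasivariety (S (P L)) -> quasicompact L.
Proof.
move=> [Sigma HS] X I prem c Hall.
have cong := fin_entails_congruence L prem.
have QSP : S (P L) (quot_alg (fin_entails L prem)).
  apply/HS => q Hq; apply: fin_quot_sat_qi => A LA; exact: (proj1 (HS A) (SP_of_L LA)).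
have Hc : holds_impl _ prem (fun=> True) c := holds_impl_SP Hall QSP.
have /(cls_eqP cong) [l Hl] : cls (fin_entails L prem) c.1 = cls _ c.2.
  rewrite -!(eval_quot_cls cong); apply: Hc => i _; rewrite !(eval_quot_cls cong).
  by apply/(cls_eqP cong); exists [:: i] => A LA v Hv; apply: Hv; left.
by exists l.
Qed.

Lemma quasicompact_D_iff_hyper (K : class ar) : quasicompact (D K) <-> hyper_quasi_compact K.
Proof.
split=> H X I prem c Hall.
- have [|l Hl] := H X I prem c.
    by move=> B [A [sigma [KA ->]]]; apply/holds_impl_derived; exact: Hall.
  by exists l => A KA sigma; apply/holds_impl_derived; apply: Hl; exists A, sigma.
- have [|l Hl] := H X I prem c.
    by move=> A KA sigma; apply/holds_impl_derived; apply: Hall; exists A, sigma.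
  by exists l => B [A [sigma [KA ->]]]; apply/holds_impl_derived; exact: Hl.
Qed.

End Algebras.

Theorem theorem4p6 (F : Type) (ar : F -> nat) (K : class ar) :
  (is_quasivariety (S (P (D K))) <-> quasicompact (D K)) /\
  (quasicompact (D K) <-> hyper_quasi_compact K).
Proof.
split; last exact: quasicompact_D_iff_hyper.
by split; [exact: quasicompact_of_quasivariety_SP | exact: quasivariety_SP_of_quasicompact].
Qed.
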